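(* Every affine equivariant integrator map is affine functionally equivariant; that is, if $\phi$ is affine equivariant, then for all Banach spaces $Y,Z$, every affine map $F\colon Y\to Z$, and every $f\in\mathfrak{X}(Y)$, with $g\in\mathfrak{X}(Y\times Z)$ given by $g(y,z)=\bigl(f(y),F'(y)f(y)\bigr)$, we have $\phi(f)\sim_{(\mathrm{id},F)}\phi(g)$.
   Context: All spaces are real Banach spaces; $\mathfrak{X}(Y)$ denotes the set of smooth vector fields on $Y$. An integrator map $\phi$ is a collection of smooth maps $\phi_Y\colon\mathfrak{X}(Y)\to\mathfrak{X}(Y)$, one for each Banach space $Y$; write $\phi(f)=\phi_Y(f)$. For a Gâteaux differentiable $\chi\colon Y\to U$, $f\in\mathfrak{X}(Y)$ and $g\in\mathfrak{X}(U)$ are $\chi$-related, $f\sim_\chi g$, if $\chi'(y)f(y)=g(\chi(y))$ for all $y$. $\phi$ is affine equivariant if for every affine map $A\colon Y\to U$ between Banach spaces, $f\sim_A g$ implies $\phi(f)\sim_A\phi(g)$. The map $(\mathrm{id},F)\colon Y\to Y\times Z$ is $y\mapsto(y,F(y))$. *)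

(* Real Banach spaces = [completeNormedModType R]
   for an arbitrary [R : realType]. *)
From HB Require Import structures.
From mathcomp Require Import all_boot all_order all_algebra.
From mathcomp Require Import all_classical all_reals all_analysis.
Set Implicit Arguments. Unset Strict Implicit. Unset Printing Implicit Defensive.
Import Order.TTheory GRing.Theory Num.Theory numFieldNormedType.Exports.
Local Open Scope ring_scope.
Local Open Scope classical_set_scope.

(** The product of two Banach spaces is a Banach space (the library provides
    the normed-module structure on [U * V] but not completeness). *)
Section prod_complete.
Variables (R : realType) (Y Z : completeNormedModType R).
Let P : normedModType R := (Y * Z)%type.
Lemma prod_cauchy_cvg (F : set_system P) :
  ProperFilter F -> cauchy F -> cvg F.
Proof.
move=> FF /cauchy_ballP Fc.
have c1 : cauchy (fst @ F).
  apply/cauchy_ballP => e e0; rewrite near_map2.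
  by move: (Fc e e0); apply: filterS => -[x y] [].
have c2 : cauchy (snd @ F).
  apply/cauchy_ballP => e e0; rewrite near_map2.
  by move: (Fc e e0); apply: filterS => -[x y] [].
have /cauchy_cvg h1 := c1. have /cauchy_cvg h2 := c2.
apply/cvg_ex; exists (lim (fst @ F), lim (snd @ F)).
have := cvg_pair h1 h2 => /(_ FF).
move=> /(_ _ _) h.
have e : (fun x : P => (x.1, x.2)) = id by apply: funext => -[].
by rewrite e in h; exact: h.
Qed.
HB.instance Definition _ := Uniform_isComplete.Build (Y * Z)%type prod_cauchy_cvg.
End prod_complete.

Section defs.
Variable R : realType.

(** Smoothness (C^oo in the Fréchet sense).  [D k x] is the k-th Fréchet
    derivative of [f] at [x], viewed as a k-multilinear map (its arguments
    are given as a list of k vectors). *)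
Definition smooth (V W : normedModType R) (f : V -> W) : Prop :=
  exists D : nat -> V -> seq V -> W,
  [/\ forall x, D 0%N x [::] = f x,
      forall k x vs, size vs = k -> linear (fun h => D k.+1 x (h :: vs)),
      forall k x, exists C : R, forall vs, size vs = k ->
          all (fun v => `|v| <= 1) vs -> `|D k x vs| <= C &
      forall k x (e : R), 0 < e -> \forall h \near (0 : V), forall vs,
          size vs = k -> all (fun v => `|v| <= 1) vs ->
          `|D k (x + h) vs - D k x vs - D k.+1 x (h :: vs)| <= e * `|h| ].

Definition VF (Y : completeNormedModType R) := {f : Y -> Y | smooth f}.

Definition gateaux_differentiable (V W : normedModType R) (chi : V -> W) :=
  forall y, (forall v, derivable chi y v) /\
            linear (fun v => 'D_v chi y) /\ continuous (fun v => 'D_v chi y).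

Definition related (V W : normedModType R) (chi : V -> W)
    (f : V -> V) (g : W -> W) :=
  gateaux_differentiable chi /\ forall y, 'D_(f y) chi y = g (chi y).

Definition affine (V W : normedModType R) (A : V -> W) :=
  exists (L : V -> W) (c : W), [/\ linear L, continuous L & forall x, A x = L x + c].

Definition integrator_map :=
  forall Y : completeNormedModType R, VF Y -> VF Y.

Definition affine_equivariant (phi : integrator_map) :=
  forall (Y U : completeNormedModType R) (A : Y -> U) (f : VF Y) (g : VF U),
    affine A -> related A (sval f) (sval g) ->
    related A (sval (phi Y f)) (sval (phi U g)).

Definition id_pair (Y Z : completeNormedModType R) (F : Y -> Z) :
  Y -> (Y * Z)%type := fun y => (y, F y).

End defs.

From HB Require Import structures.
From mathcomp Require Import all_boot all_order all_algebra.
From mathcomp Require Import all_classical all_reals all_analysis.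
Set Implicit Arguments. Unset Strict Implicit.
Import Order.TTheory GRing.Theory Num.Theory numFieldNormedType.Exports.
Local Open Scope ring_scope.
Local Open Scope classical_set_scope.

(* The map (id, F) is itself affine, and the derivative of an affine map
   x |-> L x + c in direction v is L v at every point.  Hence
   (id, F)'(y) f(y) = (f(y), F'(y) f(y)) = g(y, F y), i.e. f ~_(id,F) g, and
   affine equivariance transports this relation to phi(f) ~_(id,F) phi(g). *)

Section affine_derivative.
Variables (R : realType) (V W : normedModType R) (A L : V -> W) (c : W).
Hypotheses (linL : linear L) (AE : forall x, A x = L x + c).

Lemma affine_difference_quotient_cvg (y v : V) :
  (fun h : R => h^-1 *: ((A \o shift y) (h *: v) - A y)) @ 0^' --> L v.
Proof.
apply: cvg_near_cst; near=> h.
have h_neq0 : h != 0 by near: h; exact: nbhs_dnbhs_neq.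
rewrite /= !AE linL.
by rewrite -(addrA (h *: L v)) addrK scalerA mulVf // scale1r.
Unshelve. all: by end_near.
Qed.

Lemma derivable_affine (y v : V) : derivable A y v.
Proof. by apply/cvg_ex; exists (L v); exact: affine_difference_quotient_cvg. Qed.

Lemma derive_affine (y v : V) : 'D_v A y = L v.
Proof. exact/cvg_lim/affine_difference_quotient_cvg. Qed.

End affine_derivative.

Lemma affine_gateaux_differentiable (R : realType) (V W : normedModType R)
    (A : V -> W) :
  affine A -> gateaux_differentiable A.
Proof.
move=> [L [c [linL contL AE]]] y.
have -> : (fun v => 'D_v A y) = L by apply: funext => v; exact: derive_affine.
by split=> // v; exact: derivable_affine.
Qed.

Lemma linear_graph (R : pzRingType) (V W : lmodType R) (L : V -> W) :
  linear L -> linear (fun x => (x, L x) : V * W).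
Proof. by move=> linL a u v; congr (_, _); exact: linL. Qed.

Section id_pair.
Variables (R : realType) (Y Z : completeNormedModType R) (F : Y -> Z).

Lemma id_pair_affine_decomposition (L : Y -> Z) (c : Z) :
  (forall y, F y = L y + c) -> forall y, id_pair F y = (y, L y) + (0, c).
Proof. by move=> FE y; rewrite /id_pair FE; congr (_, _); rewrite /= addr0. Qed.

Hypothesis affF : affine F.

Lemma affine_id_pair : affine (id_pair F).
Proof.
case: affF => [L [c [linL contL FE]]].
exists (fun y => (y, L y)), (0, c); split.
- exact: linear_graph.
- by move=> y; apply: cvg_pair => //; exact: contL.
- exact: id_pair_affine_decomposition.
Qed.

Lemma derive_id_pair (y v : Y) : 'D_v (id_pair F) y = (v, 'D_v F y).
Proof.
case: affF => [L [c [linL contL FE]]].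
rewrite (derive_affine (linear_graph linL) (id_pair_affine_decomposition FE)).
by rewrite (derive_affine linL FE).
Qed.

End id_pair.

Theorem proposition2p6 (R : realType) (phi : integrator_map R) :
  affine_equivariant phi ->
  forall (Y Z : completeNormedModType R) (F : Y -> Z)
         (f : VF Y) (g : VF (Y * Z)%type),
    affine F ->
    (forall (y : Y) (z : Z), sval g (y, z) = (sval f y, 'D_(sval f y) F y)) ->
    related (id_pair F) (sval (phi Y f)) (sval (phi (Y * Z)%type g)).
Proof.
move=> phi_equiv Y Z F f g affF gE.
have aff_idF := affine_id_pair affF.
apply: phi_equiv => //; split; first exact: affine_gateaux_differentiable.
by move=> y; rewrite derive_id_pair // gE.
Qed.
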